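(* Let $\mathbf T$ be a countably infinite homogeneous tournament and $\mathbf T^*$ an expansion of $\mathbf T$ as in the context such that $\mathrm{Age}(\mathbf T^* )$ has the Ramsey property. Then the class $\mathrm{Age}(I_\omega[\mathbf T]^* )$ has the Ramsey property.
   Context: For relational structures $\mathbf A,\mathbf B$ in the same language, $\binom{\mathbf B}{\mathbf A}$ denotes the set of substructures of $\mathbf B$ isomorphic to $\mathbf A$. For $k\ge 1$, $\mathbf C\to(\mathbf B)^{\mathbf A}_k$ means: for every map $c:\binom{\mathbf C}{\mathbf A}\to[k]=\{0,\dots,k-1\}$ there is $\mathbf B'\in\binom{\mathbf C}{\mathbf B}$ such that $c$ is constant on $\binom{\mathbf B'}{\mathbf A}$. A class $\mathcal K$ of finite structures has the Ramsey property if for all $k\ge1$ and all $\mathbf A,\mathbf B\in\mathcal K$ there is $\mathbf C\in\mathcal K$ with $\mathbf C\to(\mathbf B)^{\mathbf A}_k$. The age $\mathrm{Age}(\mathbf F)$ of a structure $\mathbf F$ is the class of finite structures embeddable in $\mathbf F$. A tournament is a directed graph in which every pair of distinct vertices carries exactly one directed edge; it is homogeneous if every isomorphism between finite substructures extends to an automorphism. $\mathbf T=(T,E^{\mathbf T})$ is a countable homogeneous tournament, and $\mathbf T^*$ is an expansion of $\mathbf T$ to a countable relational language $L_{\mathbf T^*}\supseteq\{E,<\}$ in which $<$ is interpreted as a linear order $<^*$ on $T$. Fix a linear order $\prec$ on $\mathbb N$ with $(\mathbb N,\prec)\cong(\mathbb Q,<)$. The structure $I_\omega[\mathbf T]^*$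 has universe $\mathbb N\times T$ and language $L_{\mathbf T^*}$, interpreted as: for each $m$-ary $R\in L_{\mathbf T^*}\setminus\{<\}$ (including $E$), $R((k_1,x_1),\dots,(k_m,x_m))$ iff $k_1=\dots=k_m$ and $R^{\mathbf T^*}(x_1,\dots,x_m)$; and $(i,x)<(j,y)$ iff $i\prec j$, or $i=j$ and $x<^*y$. *)

From HB Require Import structures.
From mathcomp Require Import all_boot all_order all_algebra.
Set Implicit Arguments. Unset Strict Implicit. Unset Printing Implicit Defensive.

Section Structures.
Variables (L : countType) (ar : L -> nat).

(* An interpretation of the language L on a carrier A: each symbol R is
   interpreted as a predicate on tuples, represented as sequences; only
   sequences of length [ar R] are ever relevant (see [emb]). *)
Definition interp (A : Type) := forall R : L, seq A -> Prop.

Record finstr := FinStr { fcar : finType; frel : interp fcar }.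
Arguments frel : clear implicits.

Definition emb (A B : Type) (IA : interp A) (IB : interp B) (f : A -> B) :=
  injective f /\
  forall (R : L) (xs : seq A), size xs = ar R -> (IA R xs <-> IB R (map f xs)).

Definition fiso (A B : finstr) :=
  exists f : fcar A -> fcar B, bijective f /\ emb (frel A) (frel B) f.

Definition substr (C : finstr) (S : {set fcar C}) : finstr :=
  @FinStr {x : fcar C | x \in S} (fun R xs => frel C R (map val xs)).

(* C -> (B)^A_k : every k-colouring of the copies of A in C is constant on the
   copies of A inside some copy of B (colourings of all subsets restrict to
   arbitrary colourings of copies of A, as k >= 1 in all uses). *)
Definition arrows (C B A : finstr) (k : nat) :=
  forall c : {set fcar C} -> 'I_k,
  exists B' : {set fcar C},
    fiso (substr B') B /\
    forall S1 S2 : {set fcar C}, S1 \subset B' -> S2 \subset B' ->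
      fiso (substr S1) A -> fiso (substr S2) A -> c S1 = c S2.

Definition ramsey (K : finstr -> Prop) :=
  forall k : nat, 1 <= k -> forall A B : finstr, K A -> K B ->
  exists C : finstr, K C /\ arrows C B A k.

Definition age (X : Type) (IF : interp X) (A : finstr) :=
  exists f : fcar A -> X, emb (frel A) IF f.

End Structures.

Definition brel (L : countType) (X : Type) (I : interp L X) (R : L) (x y : X) :=
  I R [:: x; y].

Definition countably_infinite (T : countType) :=
  ~ exists s : seq T, forall x : T, x \in s.

Definition tournament (T : Type) (e : T -> T -> Prop) :=
  (forall x, ~ e x x) /\ (forall x y, x <> y -> (e x y <-> ~ e y x)).

Definition homogeneous_digraph (T : eqType) (e : T -> T -> Prop) :=
  forall (s : seq T) (f : T -> T),
    {in s &, injective f} ->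
    (forall x y, x \in s -> y \in s -> (e x y <-> e (f x) (f y))) ->
    exists g : T -> T, bijective g /\ (forall x y, e x y <-> e (g x) (g y)) /\
                       {in s, g =1 f}.

Definition strict_linear_order (T : Type) (r : T -> T -> Prop) :=
  (forall x, ~ r x x) /\ (forall x y z, r x y -> r y z -> r x z) /\
  (forall x y, x <> y -> r x y \/ r y x).

Definition iso_to_Q (prec : rel nat) :=
  exists h : nat -> rat, bijective h /\ forall i j, prec i j = (h i < h j)%R.

Definition Iomega (L : countType) (T : countType) (lt : L) (prec : rel nat)
  (Ts : interp L T) : interp L (nat * T) :=
  fun R xs =>
    if R == lt then
      match xs with
      | [:: a; b] => prec a.1 b.1 \/ (a.1 = b.1 /\ Ts lt [:: a.2; b.2])
      | _ => False
      end
    else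
      (forall a b, a \in xs -> b \in xs -> a.1 = b.1) /\ Ts R (map snd xs).

From Pilot Require Import Defs.
From mathcomp Require Import all_boot all_order all_algebra finmap zify.
From Stdlib Require Import ClassicalEpsilon Lia.
Set Implicit Arguments. Unset Strict Implicit. Unset Printing Implicit Defensive.
Import Order.TTheory GRing.Theory Num.Theory.
Local Open Scope fset_scope.

(* A point (i, x) of I_omega[T]^* lies in block i, and two points lie in the
   same block iff they are equal or E-related (T is a tournament, and E never
   relates distinct blocks).  Hence an isomorphism between finite subsets is
   the same as an order-preserving map of the blocks together with
   isomorphisms between corresponding slices {x | (i, x) in U}
   ([block_iso], [local_iso_decompose]).

   Consequently the age does not depend on the dense order of the blocks, and
   we may order the blocks by the usual order of nat ([age_transfer]).  For
   that order, given A with a blocks and B with b blocks, we take c blocks by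
   the finite Ramsey theorem for a-subsets ([finite_ramsey]) and a finite
   Z in T by a product Ramsey theorem in the age of T^* ([ramsey_tuples]); then
   [c] * Z is the required structure ([ramsey_fset_Iomega]). *)

Section FiniteStructures.
Variables (L : countType) (ar : L -> nat).

Lemma fiso_sym (A B : finstr L) : fiso ar A B -> fiso ar B A.
Proof.
case=> f [[g fK gK] [finj fR]]; exists g; split; first by exists f.
split; first exact: can_inj gK.
move=> R ys hs; have := fR R (map g ys); rewrite size_map hs => /(_ erefl).
by rewrite -map_comp (eq_map gK) map_id => h; split => /h.
Qed.

Lemma fiso_trans (A B C : finstr L) : fiso ar A B -> fiso ar B C -> fiso ar A C.
Proof.
case=> f [fb [finj fR]] [g [gb [ginj gR]]]; exists (g \o f); split.
  exact: bij_comp.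
split; first exact: inj_comp.
move=> R xs hs; rewrite map_comp; split.
  by move/(fR R xs hs)/(gR R (map f xs)); rewrite size_map; apply.
by move=> h; apply/(fR R xs hs)/(gR R (map f xs)) => //; rewrite size_map.
Qed.

(* An injection into a structure that is not larger is a bijection, so a
   relation-preserving injection of that kind is an isomorphism. *)
Lemma fiso_of_inj (A B : finstr L) (h : fcar A -> fcar B) :
  injective h -> #|fcar B| <= #|fcar A| ->
  (forall R xs, size xs = ar R -> (@Defs.frel _ A R xs <-> @Defs.frel _ B R (map h xs))) ->
  fiso ar A B.
Proof. by move=> hi hc hR; exists h; split; [exact: inj_card_bij | split]. Qed.

Definition induced (X : choiceType) (I : interp L X) (S : {fset X}) : finstr L :=
  @FinStr L S (fun R xs => I R (map val xs)).

Lemma age_induced (X : choiceType) (I : interp L X) (S : {fset X}) :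
  age ar I (induced I S).
Proof. by exists val; split; [exact: val_inj | move=> R xs _]. Qed.

(* [f] is an isomorphism from the substructure of [I] on [U] onto the
   substructure of [J] on [V]; working with such "local" isomorphisms between
   finite subsets avoids the dependent types of [finstr]. *)
Definition local_iso (X Y : choiceType) (I : interp L X) (J : interp L Y)
  (U : {fset X}) (V : {fset Y}) (f : X -> Y) :=
  {in U &, injective f} /\ f @` U = V /\
  forall R xs, size xs = ar R -> all (mem U) xs -> (I R xs <-> J R (map f xs)).

Definition isomorphic (X Y : choiceType) (I : interp L X) (J : interp L Y)
  (U : {fset X}) (V : {fset Y}) := exists f, local_iso I J U V f.

Lemma all_mem_val (X : choiceType) (U : {fset X}) (xs : seq X) :
  all (mem U) xs -> exists us : seq U, xs = map val us.
Proof.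
elim: xs => [|x xs IH] /=; first by exists [::].
by case/andP=> hx /IH [us ->]; exists ([` hx] :: us).
Qed.

Lemma local_iso_fiso (X Y : choiceType) (I : interp L X) (J : interp L Y) U V f :
  local_iso I J U V f -> fiso ar (induced I U) (induced J V).
Proof.
case=> fi [fU fR].
have hV (u : U) : f (val u) \in V by rewrite -fU in_imfset //= valP.
apply: (@fiso_of_inj (induced I U) (induced J V) (fun u : U => [` hV u])).
- by move=> u1 u2 /(congr1 val) /= /fi e; apply: val_inj; apply: e; exact: valP.
- by rewrite /= -!cardfE -fU card_in_imfset.
- move=> R us hs /=; rewrite -map_comp /= (map_comp f val).
  apply: fR; first by rewrite size_map.
  by apply/allP => x /mapP [u _ ->]; exact: valP.
Qed.

(* Conversely, an isomorphism of induced substructures extends to a map of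
   the carriers; the default [y0] is its value outside [U]. *)
Lemma fiso_local_iso (X Y : choiceType) (I : interp L X) (J : interp L Y) U V (y0 : Y) :
  fiso ar (induced I U) (induced J V) -> isomorphic I J U V.
Proof.
case=> g [[g' gK g'K] [gi gR]].
pose f (x : X) := if insub x is Some u then val (g u) else y0.
have fv (u : U) : f (val u) = val (g u) by rewrite /f valK.
exists f; split.
  move=> x1 x2 h1 h2; rewrite -[x1]/(val [` h1]) -[x2]/(val [` h2]) !fv.
  by move/val_inj/gi => ->.
split.
  apply/fsetP => y; apply/imfsetP/idP => [[x /= hx ->]|hy].
    by rewrite -[x]/(val [` hx]) fv; apply: valP.
  by exists (val (g' [` hy])); [exact: valP | rewrite fv g'K].
move=> R xs hs /all_mem_val [us Exs]; rewrite Exs size_map in hs *.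
by rewrite -map_comp (eq_map (f := f \o val) fv) map_comp; apply: (gR R us).
Qed.

Lemma isomorphic_refl (X : choiceType) (I : interp L X) U : isomorphic I I U U.
Proof.
exists id; split; first by move=> x y.
by split; [exact: imfset_id | move=> R xs _ _; rewrite map_id].
Qed.

Lemma isomorphic_sym (X Y : choiceType) (I : interp L X) (J : interp L Y) U V (x0 : X) :
  isomorphic I J U V -> isomorphic J I V U.
Proof. by case=> f /local_iso_fiso/fiso_sym; apply: fiso_local_iso x0. Qed.

Lemma isomorphic_trans (X Y Z : choiceType) (I : interp L X) (J : interp L Y)
  (K : interp L Z) U V W (z0 : Z) :
  isomorphic I J U V -> isomorphic J K V W -> isomorphic I K U W.
Proof.
case=> f /local_iso_fiso h1 [g /local_iso_fiso h2].
exact: fiso_local_iso z0 (fiso_trans h1 h2).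
Qed.

Lemma local_iso_restr (X Y : choiceType) (I : interp L X) (J : interp L Y) U V f U' :
  local_iso I J U V f -> U' `<=` U -> local_iso I J U' (f @` U') f.
Proof.
case=> fi [_ fR] /fsubsetP hU; split; first by move=> x y /hU hx /hU hy; apply: fi.
split => // R xs hs hxs; apply: fR => //; apply/allP => x /(allP hxs); exact: hU.
Qed.

Lemma local_iso_image (X Y : choiceType) (I : interp L X) (J : interp L Y) U V f U' :
  local_iso I J U V f -> U' `<=` U -> f @` U' `<=` V.
Proof. by case=> _ [<- _] /fsubsetP hU; apply: subset_imfset. Qed.

Lemma local_iso_preimage (X Y : choiceType) (I : interp L X) (J : interp L Y) U V f V' :
  local_iso I J U V f -> V' `<=` V -> exists2 U', U' `<=` U & f @` U' = V'.
Proof.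
case=> fi [fU _] /fsubsetP hV; exists [fset x in U | f x \in V'].
  by apply/fsubsetP => x; rewrite inE => /andP[].
apply/fsetP => y; apply/imfsetP/idP => [[x]|hy].
  by rewrite inE => /andP[_ h] ->.
have := hV _ hy; rewrite -fU => /imfsetP[x hx e]; exists x => //.
by rewrite !inE /= hx -e.
Qed.

Lemma emb_substr (C : finstr L) (X : choiceType) (I : interp L X)
  (e : fcar C -> X) (Q : {set fcar C}) :
  emb ar (@Defs.frel _ C) I e -> fiso ar (substr Q) (induced I [fset e x | x in Q]).
Proof.
case=> ei eR.
have hV (u : {x | x \in Q}) : e (val u) \in [fset e x | x in Q].
  by apply/imfsetP; exists (val u) => //; exact: valP.
apply: (@fiso_of_inj (substr Q) (induced I _) (fun u => [` hV u])).
- by move=> u1 u2 /(congr1 val) /= /ei /val_inj.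
- rewrite /= -cardfE card_in_imfset /=; last by move=> x y _ _ /ei.
  by rewrite card_sig -cardE.
- by move=> R us hs /=; rewrite -map_comp (map_comp e val); apply: eR; rewrite size_map.
Qed.

Lemma emb_fiso (A : finstr L) (X : choiceType) (I : interp L X) (e : fcar A -> X) :
  emb ar (@Defs.frel _ A) I e -> fiso ar A (induced I [fset e x | x : fcar A]).
Proof.
case=> ei eR.
have hV (u : fcar A) : e u \in [fset e x | x : fcar A] by apply/imfsetP; exists u.
apply: (@fiso_of_inj A (induced I _) (fun u => [` hV u])).
- by move=> u1 u2 /(congr1 val) /= /ei.
- by rewrite /= -cardfE card_in_imfset /= -?cardE //; move=> x y _ _ /ei.
- by move=> R us hs /=; rewrite -map_comp; exact: eR.
Qed.

Lemma emb_local_iso (A : finstr L) (X Y : choiceType) (I : interp L X)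
  (J : interp L Y) e V g :
  emb ar (@Defs.frel _ A) I e -> local_iso I J [fset e x | x : fcar A] V g ->
  emb ar (@Defs.frel _ A) J (g \o e).
Proof.
case=> ei eR [gi [_ gR]].
have mI x : e x \in [fset e x | x : fcar A] by apply/imfsetP; exists x.
split; first by move=> x y /= hxy; apply/ei/(gi _ _ (mI x) (mI y)).
move=> R xs hs; rewrite map_comp -(gR R (map e xs)) ?size_map //.
  exact: eR.
by rewrite all_map; apply/allP => x _ /=; exact: mI.
Qed.

End FiniteStructures.

Lemma setval_img (X : choiceType) (S : {fset X}) (Q : {set S}) :
  [set x : S | val x \in [fset val y | y in Q]] = Q.
Proof.
apply/setP => x; rewrite inE; apply/imfsetP/idP => [[y hy /val_inj ->]//|hx].
by exists x.
Qed.

(* The Ramsey property of an age follows from its restatement for finite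
   subsets of the structure (the converse is [ramsey_fset] below): a colouring
   of the subsets of [induced I SC] is a colouring of finite subsets of [SC]. *)
Lemma ramsey_of_fset (L : countType) (ar : L -> nat) (X : choiceType)
  (I : interp L X) (x0 : X) :
  (forall (SA SB : {fset X}) k, 0 < k -> exists SC : {fset X},
    forall kap : {fset X} -> 'I_k, exists W, [/\ W `<=` SC, isomorphic ar I I SB W &
      forall U1 U2, U1 `<=` W -> U2 `<=` W ->
        isomorphic ar I I SA U1 -> isomorphic ar I I SA U2 -> kap U1 = kap U2]) ->
  ramsey ar (age ar I).
Proof.
move=> hR k k1 A B [eA hA] [eB hB].
have [SC hSC] := hR [fset eA x | x : fcar A] [fset eB x | x : fcar B] k k1.
exists (induced I SC); split; first exact: age_induced.
move=> cC; have [W [/fsubsetP WSC [g lW] hW]] := hSC (fun U => cC [set x : SC | val x \in U]).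
have embv : emb ar (@Defs.frel _ (induced I SC)) I val.
  by split; [exact: val_inj | move=> R xs _].
set B' := [set x : SC | val x \in W].
have imB' : [fset val x | x in B'] = W.
  apply/fsetP => y; apply/imfsetP/idP => [[x]|hy]; first by rewrite inE => h ->.
  by exists [` WSC _ hy]; rewrite // inE.
exists B'; split.
  apply: fiso_trans (emb_substr (C := induced I SC) B' embv) _; rewrite imB'.
  exact: fiso_trans (fiso_sym (local_iso_fiso lW)) (fiso_sym (emb_fiso hB)).
have copyA (S : {set fcar (induced I SC)}) : S \subset B' -> fiso ar (substr S) A ->
    [fset val x | x in S] `<=` W /\ isomorphic ar I I [fset eA x | x : fcar A] [fset val x | x in S].
  move=> hS fS; split.
    by apply/fsubsetP => y /imfsetP[x hx ->]; have := subsetP hS _ hx; rewrite inE.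
  apply: (fiso_local_iso x0); apply: fiso_trans (fiso_sym (emb_fiso hA)) _.
  exact: fiso_trans (fiso_sym fS) (emb_substr (C := induced I SC) S embv).
move=> S1 S2 /copyA h1 /copyA h2 /h1 [s1 i1] /h2 [s2 i2].
by rewrite -(setval_img S1) -(setval_img S2); apply: hW.
Qed.

Lemma pigeonhole k b (cs : seq 'I_k) : 0 < k -> k * b <= size cs ->
  exists c : 'I_k, b <= count (pred1 c) cs.
Proof.
move=> k0 hs; case: (boolP [exists c : 'I_k, b <= count (pred1 c) cs]).
  by move/existsP.
rewrite negb_exists => /forallP hc.
have count_sum : \sum_(c < k) count (pred1 c) cs = size cs.
  elim: (cs) => [|x s IH] /=; first by rewrite big1.
  rewrite big_split /= IH (bigD1 x) //= eqxx big1 ?add1n ?addn0 //.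
  by move=> c /negbTE; rewrite eq_sym => ->.
have : size cs <= k * b.-1.
  rewrite -count_sum -[k in k * _]card_ord -sum_nat_const.
  by apply: leq_sum => c _; have := hc c; rewrite -ltnNge; lia.
by case: b hs hc => [_ /(_ (Ordinal k0))|b hs _ h] //; lia.
Qed.

Lemma fsubset_of_card (S : {fset nat}) b : b <= #|` S| ->
  exists2 H, H `<=` S & #|` H| = b.
Proof.
move=> hb; exists [fset x in take b (enum_fset S)].
  by apply/fsubsetP => x; rewrite inE => /mem_take.
rewrite card_fseq undup_id ?size_take; last exact/take_uniq/fset_uniq.
by case: ltnP => // h; apply/anti_leq; rewrite h hb.
Qed.

(* Finite Ramsey theorem for [a]-subsets of natural numbers, proved by
   induction on [a] through prehomogeneous sequences. *)
Section FiniteRamsey.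
Variable k : nat.
Hypothesis k0 : 0 < k.

Definition homogeneous (a : nat) (col : {fset nat} -> 'I_k) (H : {fset nat}) :=
  exists c0, forall J, J `<=` H -> #|` J| = a -> col J = c0.

Definition ramsey_nat a := forall b, exists c, forall (S : {fset nat}) col,
  c <= #|` S| -> exists H, [/\ H `<=` S, #|` H| = b & homogeneous a col H].

Lemma ramsey_nat0 : ramsey_nat 0.
Proof.
move=> b; exists b => S col /fsubset_of_card [H hH cH].
by exists H; split => //; exists (col fset0) => J _ /cardfs0_eq ->.
Qed.

Fixpoint prehomogeneous a (col : {fset nat} -> 'I_k) (xs : seq nat) (cs : seq 'I_k) :=
  match xs, cs with
  | x :: xs', c :: cs' =>
      (forall J, J `<=` [fset y in xs'] -> #|` J| = a -> col (x |` J) = c) /\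
      prehomogeneous a col xs' cs'
  | [::], [::] => True
  | _, _ => False
  end.

Lemma prehomogeneous_size a col xs cs : prehomogeneous a col xs cs -> size xs = size cs.
Proof. by elim: xs cs => [|x xs IH] [|c cs] //= [_ /IH ->]. Qed.

Lemma prehomogeneous_nth a col xs cs : prehomogeneous a col xs cs ->
  forall i, i < size xs -> forall J, J `<=` [fset y in drop i.+1 xs] -> #|` J| = a ->
  col (nth 0 xs i |` J) = nth (Ordinal k0) cs i.
Proof.
elim: xs cs => [|x xs IH] [|c cs] //= [h1 h2] [|i] hi J hJ cJ /=.
  by apply: h1; rewrite drop0 in hJ.
exact: (IH cs h2 i).
Qed.

(* Long prehomogeneous sequences exist in large sets: choose [x] in [S],
   then a large set homogeneous for the colouring [J |-> col (x |` J)] of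
   [a]-subsets of [S `\ x], and recurse inside it. *)
Lemma prehomogeneous_exists a : ramsey_nat a -> forall i, exists d,
  forall (S : {fset nat}) col, d <= #|` S| ->
  exists xs cs, [/\ size xs = i, uniq xs, {subset xs <= S} & prehomogeneous a col xs cs].
Proof.
move=> IH; elim => [|i [d hd]]; first by exists 0 => S col _; exists [::], [::].
have [c hc] := IH d; exists c.+1 => S col hS.
have /fset0Pn [x hx] : S != fset0 by rewrite -cardfs_gt0; lia.
have hS' : c <= #|` S `\ x| by move: hS; rewrite (cardfsD1 x) hx /=; lia.
have [H [/fsubsetP hH cH [c0 hc0]]] := hc (S `\ x) (fun J => col (x |` J)) hS'.
have [xs [cs [sx ux subx px]]] := hd H col (eq_leq (esym cH)).
have xsSx y : y \in xs -> y \in S `\ x by move/subx/hH.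
exists (x :: xs), (c0 :: cs); split => /=.
- by rewrite sx.
- by rewrite ux andbT; apply/negP => /xsSx; rewrite !inE eqxx.
- by move=> y; rewrite inE => /orP[/eqP->//|/xsSx]; rewrite !inE => /andP[].
- split => // J /fsubsetP hJ cJ; apply: hc0 => //; apply/fsubsetP => y /hJ.
  by rewrite inE => /subx.
Qed.

Lemma prehomogeneous_select a col xs cs (c0 : 'I_k) :
  prehomogeneous a col xs cs -> uniq xs ->
  forall J, J `<=` [fset y in [seq p.1 | p <- zip xs cs & p.2 == c0]] ->
  #|` J| = a.+1 -> col J = c0.
Proof.
move=> px ux J hJ cJ; have scs := prehomogeneous_size px.
have hJx y : y \in J ->
    exists2 i, i < size xs & nth 0 xs i = y /\ nth (Ordinal k0) cs i = c0.
  move/(fsubsetP hJ); rewrite inE => /mapP[[y' c] /=].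
  rewrite mem_filter /= => /andP[/eqP -> /nthP] /(_ (0, c0)) [i hi e] ->.
  have hi' : i < size xs by move: hi; rewrite size_zip scs minnn -scs.
  move: e; rewrite nth_zip // => -[<- <-]; exists i => //.
  by rewrite (set_nth_default c0) // -scs.
have hasJ : has (mem J) xs.
  have /fset0Pn [y hy] : J != fset0 by rewrite -cardfs_gt0 cJ.
  by have [i hi [e _]] := hJx y hy; apply/hasP; exists y => //; rewrite -e mem_nth.
(* the first entry of [xs] lying in [J] determines the colour of [J] *)
set i := find (mem J) xs; set x := nth 0 xs i.
have hi : i < size xs by rewrite -has_find.
have xJ : x \in J by have := nth_find 0 hasJ.
have [i' hi' [ex cx]] := hJx x xJ.
have ii' : i' = i by apply/eqP; rewrite -(nth_uniq 0 hi' hi ux) ex.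
rewrite -(fsetD1K xJ) /x (prehomogeneous_nth px hi (J := J `\ x)).
- by rewrite -ii' cx.
- apply/fsubsetP => y; rewrite !inE => /andP[nyx yJ].
  have [j hj [ey _]] := hJx y yJ.
  have ij : i < j.
    rewrite ltn_neqAle; apply/andP; split.
      by apply/eqP => e; move/eqP: nyx; apply; rewrite -ey -e.
    by rewrite leqNgt; apply/negP => /(before_find 0); rewrite ey /= yJ.
  rewrite -ey -(subnKC ij) -nth_drop; apply: mem_nth.
  by rewrite size_drop ltn_sub2r // (leq_ltn_trans ij hj).
- by move: cJ; rewrite (cardfsD1 x) xJ /=; lia.
Qed.

Lemma size_select (xs : seq nat) (cs : seq 'I_k) c0 : size xs = size cs ->
  size [seq p.1 | p <- zip xs cs & p.2 == c0] = count (pred1 c0) cs.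
Proof.
rewrite size_map size_filter.
by elim: xs cs => [|x xs IH] [|c cs] //= [/IH ->]; rewrite eq_sym.
Qed.

Lemma select_subseq (xs : seq nat) (cs : seq 'I_k) c0 : size xs = size cs ->
  subseq [seq p.1 | p <- zip xs cs & p.2 == c0] xs.
Proof.
elim: xs cs => [|x xs IH] [|c cs] //= [/IH h].
case: (c == c0); first by rewrite /= eqxx.
exact: subseq_trans h (subseq_cons _ _).
Qed.

Lemma ramsey_nat_step a : ramsey_nat a -> ramsey_nat a.+1.
Proof.
move=> IH b; have [d hd] := prehomogeneous_exists IH (k * b).
exists d => S col hS.
have [xs [cs [sx ux subx px]]] := hd S col hS.
have scs := prehomogeneous_size px.
have [c0 hc0] : exists c0 : 'I_k, b <= count (pred1 c0) cs.
  by apply: pigeonhole => //; rewrite -scs sx.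
set sel := [seq p.1 | p <- zip xs cs & p.2 == c0].
have ssel : size sel = count (pred1 c0) cs by rewrite size_select.
have sub_sel : subseq sel xs by apply: select_subseq.
exists [fset y in take b sel]; split.
- apply/fsubsetP => y; rewrite inE => /mem_take /(mem_subseq sub_sel).
  exact: subx.
- rewrite card_fseq undup_id ?size_take ?ssel; last exact/take_uniq/(subseq_uniq sub_sel).
  by case: ltnP => //; lia.
exists c0 => J hJ; apply: (prehomogeneous_select px ux).
by apply: fsubset_trans hJ _; apply/fsubsetP => y; rewrite !inE => /mem_take.
Qed.

Theorem finite_ramsey a : ramsey_nat a.
Proof. by elim: a => [|a IH]; [exact: ramsey_nat0 | exact: ramsey_nat_step]. Qed.

End FiniteRamsey.

Fixpoint tuples_of (A : Type) (s : seq A) n : seq (seq A) :=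
  if n is n'.+1 then [seq x :: l | x <- s, l <- tuples_of s n'] else [:: [::]].

Lemma mem_tuples_of (A : eqType) (s : seq A) n l :
  size l = n -> all (mem s) l -> l \in tuples_of s n.
Proof.
elim: n l => [|n IH] [|x l] //= [e] /andP[hx hl].
by apply/allpairsP; exists (x, l); split => //; apply: IH.
Qed.

(* A [k]-colouring of [x] that also depends on a parameter ranging over a
   finite list [dom] is encoded by a single colour with [k ^ size dom]
   values: equal codes give equal colours for every parameter. *)
Lemma palette_encoding (X : Type) (D : eqType) (dom : seq D) k (chi : X -> D -> 'I_k) :
  exists kap : X -> 'I_(k ^ size dom),
    forall x x', kap x = kap x' -> {in dom, chi x =1 chi x'}.
Proof.
have cardK : #|{: (size dom).-tuple 'I_k}| = k ^ size dom by rewrite card_tuple card_ord.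
exists (fun x => cast_ord cardK (enum_rank (map_tuple (chi x) (in_tuple dom)))).
move=> x x' /cast_ord_inj /enum_rank_inj /(congr1 val) /= e d hd.
have := congr1 (fun s => nth (chi x d) s (index d dom)) e.
by rewrite /= !(nth_map d) ?index_mem // nth_index.
Qed.

Section RamseyForSubsets.
Variables (L : countType) (ar : L -> nat) (T : countType) (Ts : interp L T) (t0 : T).
Hypothesis ramseyT : ramsey ar (age ar Ts).

Local Notation isoT := (isomorphic ar Ts Ts).

Lemma ramsey_fset (al Y : {fset T}) k : 0 < k -> exists Z : {fset T},
  forall kap : {fset T} -> 'I_k, exists W, [/\ W `<=` Z, isoT Y W &
    forall U1 U2, U1 `<=` W -> U2 `<=` W -> isoT al U1 -> isoT al U2 -> kap U1 = kap U2].
Proof.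
move=> k0.
have [C [[e he] hC]] := ramseyT k0 (age_induced ar Ts al) (age_induced ar Ts Y).
exists [fset e x | x : fcar C] => kap.
have [B' [hB' hm]] := hC (fun Q => kap [fset e x | x in Q]).
exists [fset e x | x in B']; split.
- by apply/fsubsetP => y /imfsetP[x _ ->]; apply/imfsetP; exists x.
- exact: fiso_local_iso t0 (fiso_trans (fiso_sym hB') (emb_substr B' he)).
have image_of U : U `<=` [fset e x | x in B'] ->
    exists2 Q : {set fcar C}, Q \subset B' & [fset e x | x in Q] = U.
  move=> /fsubsetP hU; exists [set x in B' | e x \in U].
    by apply/subsetP => x; rewrite inE => /andP[].
  apply/fsetP => y; apply/imfsetP/idP => [[x]|hy].
    by rewrite inE => /andP[_ h] ->.
  have /imfsetP[x hx ey] := hU _ hy; exists x => //.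
  by rewrite inE hx -ey hy.
move=> U1 U2 /image_of [Q1 s1 <-] /image_of [Q2 s2 <-] [f1 l1] [f2 l2].
apply: hm => //; apply: fiso_trans (emb_substr _ he) _.
  exact: fiso_sym (local_iso_fiso l1).
exact: fiso_sym (local_iso_fiso l2).
Qed.

Definition copies (als Ws Us : seq {fset T}) :=
  size Us = size als /\ forall t, t < size als ->
    nth fset0 Us t `<=` nth fset0 Ws t /\ isoT (nth fset0 als t) (nth fset0 Us t).

Lemma copies_cons al als W Ws U Us :
  copies (al :: als) (W :: Ws) (U :: Us) <->
  (U `<=` W /\ isoT al U) /\ copies als Ws Us.
Proof.
split => [[[sz] h]|[h0 [sz h]]].
  by split; [exact: (h 0) | split => // t; exact: (h t.+1)].
by split => [|[|t]] /=; [rewrite sz | | exact: h].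
Qed.

Lemma copies_mono als Ws Ws' Us :
  (forall t, t < size als -> nth fset0 Ws t `<=` nth fset0 Ws' t) ->
  copies als Ws Us -> copies als Ws' Us.
Proof.
move=> hW [sz hU]; split => // t ht; have [s l] := hU t ht.
by split => //; exact: fsubset_trans s (hW t ht).
Qed.

Lemma copies_fsub als Ws Us (Z : {fset T}) :
  size Ws = size als -> (forall W, W \in Ws -> W `<=` Z) ->
  copies als Ws Us -> forall U, U \in Us -> U `<=` Z.
Proof.
move=> szW hW [sz hU] U /(nthP fset0) [t ht <-].
rewrite sz in ht; have [s _] := hU t ht.
by apply: fsubset_trans s (hW _ (mem_nth _ _)); rewrite szW.
Qed.

(* Induction on [als]: the colours of all possible tails are encoded in
   one colour of the head, to which [ramsey_fset] applies. *)
Lemma product_ramsey (als : seq {fset T}) (Y : {fset T}) k : 0 < k ->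
  exists Z : {fset T}, forall chi : seq {fset T} -> 'I_k, exists Ws : seq {fset T},
    [/\ size Ws = size als, forall W, W \in Ws -> W `<=` Z /\ isoT Y W &
        exists c0, forall Us, copies als Ws Us -> chi Us = c0].
Proof.
move=> k0; elim: als => [|al als [Z' hZ']].
  exists fset0 => chi; exists [::]; split => //; exists (chi [::]).
  by case=> [|? ?] [].
set dom := tuples_of (enum_fset (fpowerset Z')) (size als).
have K0 : 0 < k ^ size dom by rewrite expn_gt0 k0.
have [Z'' hZ''] := ramsey_fset al Y K0.
exists (Z'' `|` Z') => chi.
have [kap hkap] := palette_encoding dom (fun U Us => chi (U :: Us)).
have [W0 [sW0 lW0 hW0]] := hZ'' kap.
have [U0 hU0] : exists U0 : {fset T}, (exists U, U `<=` W0 /\ isoT al U) ->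
    U0 `<=` W0 /\ isoT al U0.
  case: (classic (exists U, U `<=` W0 /\ isoT al U)) => [[U hU]|nU].
    by exists U.
  by exists fset0.
have [Ws' [sz hWs' [c0 hc0]]] := hZ' (fun Us => chi (U0 :: Us)).
exists (W0 :: Ws'); split => /=; first by rewrite sz.
  move=> W; rewrite inE => /orP[/eqP ->|/hWs' [h1 h2]].
    by split => //; exact: fsubset_trans sW0 (fsubsetUl _ _).
  by split => //; exact: fsubset_trans h1 (fsubsetUr _ _).
exists c0 => -[|U Us]; first by case.
move=> /copies_cons [[sU lU] cUs].
have [sU0 lU0] := hU0 (ex_intro _ U (conj sU lU)).
rewrite (hkap U U0) ?(hW0 U U0) ?hc0 //.
apply: mem_tuples_of; first by case: cUs.
apply/allP => V hV; suff : V \in fpowerset Z' by [].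
rewrite fpowersetE; apply: copies_fsub cUs V hV => //.
by move=> W /hWs' [].
Qed.

Definition transport (f : nat -> T -> T) (J : seq nat) (Us : seq {fset T}) :=
  mkseq (fun t => f (nth 0 J t) @` nth fset0 Us t) (size Us).

Lemma copies_preimage (f : nat -> T -> T) (V : nat -> {fset T}) als J Us :
  (forall j, local_iso ar Ts Ts (V j) (f j @` V j) (f j)) -> size J = size als ->
  copies als [seq f j @` V j | j <- J] Us ->
  exists Us', copies als (map V J) Us' /\ Us = transport f J Us'.
Proof.
move=> hf szJ [sz hU].
have pick t : exists U', t < size als ->
    U' `<=` V (nth 0 J t) /\ f (nth 0 J t) @` U' = nth fset0 Us t.
  case: (ltnP t (size als)) => ht; last by exists fset0.
  have [s _] := hU t ht; rewrite (nth_map 0) ?szJ // in s.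
  by have [U' h1 h2] := local_iso_preimage (hf (nth 0 J t)) s; exists U'.
have [pk hpk] := ClassicalEpsilon.choice _ pick.
exists (mkseq pk (size als)); split.
  split => [|t ht]; first by rewrite size_mkseq.
  rewrite nth_mkseq // (nth_map 0) ?szJ //; have [s e] := hpk t ht; split => //.
  have [_ l] := hU t ht; apply: (isomorphic_trans t0 l); apply: (isomorphic_sym t0).
  by exists (f (nth 0 J t)); rewrite -e; exact: local_iso_restr (hf _) s.
apply: (@eq_from_nth _ fset0); first by rewrite !size_mkseq.
move=> t; rewrite sz => ht; rewrite nth_mkseq ?size_mkseq // nth_mkseq //.
by have [_ ->] := hpk t ht.
Qed.

(* Induction on [Js]: [product_ramsey]
   handles the new tuple [J] with copies of the set [Z'] that works for
   [Js], and the family for [Js] is transported into these copies. *)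
Lemma ramsey_tuples (als : seq {fset T}) k (Js : seq (seq nat)) : 0 < k ->
  (forall J, J \in Js -> size J = size als /\ uniq J) ->
  forall Y : {fset T}, exists Z : {fset T},
  forall chi : seq nat -> seq {fset T} -> 'I_k, exists Ws : nat -> {fset T},
    (forall j, Ws j `<=` Z /\ isoT Y (Ws j)) /\
    exists col : seq nat -> 'I_k, forall J Us, J \in Js ->
      copies als (map Ws J) Us -> chi J Us = col J.
Proof.
move=> k0; elim: Js => [|J Js IH] hJs Y.
  exists Y => chi; exists (fun _ => Y); split; last by exists (fun _ => Ordinal k0).
  by move=> j; split; [exact: fsubset_refl | exact: isomorphic_refl].
have [Z' hZ'] := IH (fun J0 h => hJs J0 (mem_behead (s := J :: Js) h)) Y.
have [Zp hZp] := product_ramsey als Z' k0.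
exists (Zp `|` Z') => chi.
have [szJ uJ] := hJs J (mem_head _ _).
have [WsP [szP hWsP [cJ hcJ]]] := hZp (chi J).
pose W' j := if j \in J then nth fset0 WsP (index j J) else Z'.
have hW' j : W' j `<=` Zp `|` Z' /\ isoT Z' (W' j).
  rewrite /W'; case: ifP => hj; last by split; [exact: fsubsetUr | exact: isomorphic_refl].
  have hi : index j J < size WsP by rewrite szP -szJ index_mem.
  have [h1 h2] := hWsP _ (mem_nth fset0 hi).
  by split => //; exact: fsubset_trans h1 (fsubsetUl _ _).
have [phi hphi] := ClassicalEpsilon.choice _ (fun j => proj2 (hW' j)).
have [Ws'' [hWs'' [col' hcol']]] := hZ' (fun J' Us' => chi J' (transport phi J' Us')).
have hphi' j : local_iso ar Ts Ts (Ws'' j) (phi j @` Ws'' j) (phi j).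
  exact: local_iso_restr (hphi j) (proj1 (hWs'' j)).
exists (fun j => phi j @` Ws'' j); split.
  move=> j; split.
    exact: fsubset_trans (local_iso_image (hphi j) (proj1 (hWs'' j))) (proj1 (hW' j)).
  exact: isomorphic_trans t0 (proj2 (hWs'' j)) (ex_intro _ _ (hphi' j)).
exists (fun J' => if J' == J then cJ else col' J') => J' Us.
case: (eqVneq J' J) => [->|ne] hJ' cU.
  apply: hcJ; apply: copies_mono cU => t ht.
  rewrite (nth_map 0) ?szJ //.
  have := local_iso_image (hphi (nth 0 J t)) (proj1 (hWs'' (nth 0 J t))).
  by rewrite /W' mem_nth ?szJ // index_uniq ?szJ.
have [Us' [cU' ->]] := copies_preimage (f := phi) hphi' (proj1 (hJs _ hJ')) cU.
by apply: hcol' cU'; move: hJ'; rewrite inE (negbTE ne).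
Qed.
End RamseyForSubsets.

Lemma sort_map_increasing (P : {fset nat}) (g : nat -> nat) :
  {in P &, forall p q, p < q -> g p < g q} ->
  map g (sort leq (enum_fset P)) = sort leq (enum_fset (g @` P)).
Proof.
move=> hg.
have s1 : sorted ltn (sort leq (enum_fset P)).
  by rewrite ltn_sorted_uniq_leq sort_uniq fset_uniq sort_sorted //; exact: leq_total.
have s2 : sorted ltn (map g (sort leq (enum_fset P))).
  apply: (homo_sorted_in (P := mem P) (e := ltn)) s1; first by move=> x y; apply: hg.
  by apply/allP => x; rewrite mem_sort.
move: (s2); rewrite ltn_sorted_uniq_leq => /andP[u2 s2'].
apply: (@sorted_eq nat leq leq_trans anti_leq) => //.
  by apply: sort_sorted => x y; exact: leq_total.
apply: uniq_perm => //; first by rewrite sort_uniq fset_uniq.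
move=> y; rewrite mem_sort; apply/mapP/imfsetP => [[x]|[x hx ->]].
  by rewrite mem_sort => hx ->; exists x.
by exists x => //; rewrite mem_sort.
Qed.

Lemma nth_ltn_mono (s : seq nat) i j : sorted ltn s -> i < size s -> j < size s ->
  (nth 0 s i < nth 0 s j) = (i < j).
Proof.
move=> ss hi hj; have mono := sorted_ltn_nth ltn_trans 0 ss.
case: (ltngtP i j) => [ij|ji|->]; [exact: mono | | by rewrite ltnn].
by apply/negbTE; rewrite -leqNgt ltnW //; exact: mono.
Qed.

Section Blocks.
Variable T : choiceType.

Definition blocks (U : {fset nat * T}) := [fset x.1 | x in U].
Definition slice (U : {fset nat * T}) p := [fset x.2 | x in U & x.1 == p].
Definition block_list (U : {fset nat * T}) := sort leq (enum_fset (blocks U)).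

Lemma mem_slice (U : {fset nat * T}) p y : (y \in slice U p) = ((p, y) \in U).
Proof.
apply/imfsetP/idP => [[x /andP[/= h /eqP e] ->]|h].
  by rewrite -e -surjective_pairing.
by exists (p, y) => //=; rewrite inE h eqxx.
Qed.

Lemma mem_blocks (U : {fset nat * T}) x : x \in U -> x.1 \in blocks U.
Proof. by move=> h; apply/imfsetP; exists x. Qed.

Lemma mem_slice_snd (U : {fset nat * T}) x : x \in U -> x.2 \in slice U x.1.
Proof. by move=> h; rewrite mem_slice -surjective_pairing. Qed.

Lemma blocksP (U : {fset nat * T}) p :
  reflect (exists y, (p, y) \in U) (p \in blocks U).
Proof.
apply: (iffP idP) => [/imfsetP[x h ->]|[y h]]; last by apply/imfsetP; exists (p, y).
by exists x.2; rewrite -surjective_pairing.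
Qed.

Lemma block_list_sorted U : sorted ltn (block_list U).
Proof.
by rewrite ltn_sorted_uniq_leq sort_uniq fset_uniq sort_sorted //; exact: leq_total.
Qed.

Lemma mem_block_list U p : (p \in block_list U) = (p \in blocks U).
Proof. by rewrite mem_sort. Qed.
End Blocks.

(* The structure [Iomega lt r Ts]: copies of [Ts] placed in the blocks
   [{i} * T], ordered between blocks by [r]. *)
Section Omega.
Variables (L : countType) (ar : L -> nat) (E lt : L) (T : countType) (Ts : interp L T).
Hypotheses (hE : E != lt) (arE : ar E = 2) (arlt : ar lt = 2)
  (htour : tournament (brel Ts E)).

Local Notation I r := (Iomega lt r Ts).

Definition single_block (xs : seq (nat * T)) :=
  forall a b, a \in xs -> b \in xs -> a.1 = b.1.

Lemma Iomega_lt r x y :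
  I r lt [:: x; y] <-> r x.1 y.1 \/ (x.1 = y.1 /\ Ts lt [:: x.2; y.2]).
Proof. by rewrite /Iomega eqxx. Qed.

Lemma Iomega_nlt r R xs : R != lt ->
  (I r R xs <-> single_block xs /\ Ts R (map snd xs)).
Proof. by move=> h; rewrite /Iomega (negbTE h). Qed.

Lemma Iomega_E r (x y : nat * T) : I r E [:: x; y] <-> x.1 = y.1 /\ Ts E [:: x.2; y.2].
Proof.
rewrite Iomega_nlt //; split => [[h1 h2]|[h1 h2]]; split => //.
  by apply: h1; rewrite !inE eqxx ?orbT.
by move=> u v; rewrite !inE => /orP[]/eqP-> /orP[]/eqP->; rewrite ?h1.
Qed.

(* Since [Ts] is a tournament, blocks are definable from [E]: two points lie
   in the same block iff they are equal or joined by an [E]-edge. *)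
Lemma same_block r (x y : nat * T) :
  x.1 = y.1 <-> x = y \/ I r E [:: x; y] \/ I r E [:: y; x].
Proof.
split => [e|[->//|[/Iomega_E[]//|/Iomega_E[]//]]].
case: (eqVneq x y) => [->|nxy]; [by left | right].
have n2 : x.2 <> y.2.
  by move=> e2; move/eqP: nxy; apply; rewrite [x]surjective_pairing [y]surjective_pairing e e2.
case: htour => _ /(_ _ _ n2) h.
case: (classic (Ts E [:: y.2; x.2])) => hyx; first by right; apply/Iomega_E.
by left; apply/Iomega_E; split => //; apply/h.
Qed.

Lemma Iomega_block (r : rel nat) R j ys : ~~ r j j -> size ys = ar R ->
  (I r R [seq (j, y) | y <- ys] <-> Ts R ys).
Proof.
move=> hr; case: (eqVneq R lt) => [->|hR].
  rewrite arlt; case: ys => [|y1 [|y2 [|]]] //= _.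
  by rewrite Iomega_lt /= (negbTE hr); split => [[|[]]//|h]; right.
move=> _; rewrite Iomega_nlt // -map_comp map_id.
by split => [[]//|h]; split => // a b /mapP[? _ ->] /mapP[? _ ->].
Qed.

Lemma local_iso_same_block r1 r2 U V f : local_iso ar (I r1) (I r2) U V f ->
  {in U &, forall x y, x.1 = y.1 <-> (f x).1 = (f y).1}.
Proof.
case=> fi [_ fR] x y hx hy; rewrite (same_block r1) (same_block r2).
have s2 : size [:: x; y] = ar E by rewrite arE.
have s2' : size [:: y; x] = ar E by rewrite arE.
have e1 := fR E _ s2 ltac:(by rewrite /= hx hy).
have e2 := fR E _ s2' ltac:(by rewrite /= hx hy).
simpl in e1, e2; split => [[->|[/e1|/e2]]|[/fi->|[/e1|/e2]]]; tauto.
Qed.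

Lemma local_iso_block_order r1 r2 U V f : local_iso ar (I r1) (I r2) U V f ->
  {in U &, forall x y, x.1 <> y.1 -> (r1 x.1 y.1 <-> r2 (f x).1 (f y).1)}.
Proof.
move=> hf x y hx hy nxy.
have nf : (f x).1 <> (f y).1 by move/(local_iso_same_block hf hx hy).
case: hf => _ [_ fR].
have s2 : size [:: x; y] = ar lt by rewrite arlt.
have := fR lt _ s2 ltac:(by rewrite /= hx hy); rewrite /= !Iomega_lt; tauto.
Qed.

Definition block_map (rho : nat -> nat) (psi : nat -> T -> T) (x : nat * T) :=
  (rho x.1, psi x.1 x.2).

Section BlockMap.
Variables (r1 r2 : rel nat) (U : {fset nat * T}) (rho : nat -> nat) (psi : nat -> T -> T).
Hypotheses (rhoi : {in blocks U &, injective rho})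
  (rhoo : {in blocks U &, forall p q, r1 p q = r2 (rho p) (rho q)})
  (hpsi : forall p, p \in blocks U ->
     local_iso ar Ts Ts (slice U p) (psi p @` slice U p) (psi p)).

Local Notation F := (block_map rho psi).

Lemma block_map_inj : {in U &, injective F}.
Proof.
move=> x y hx hy [/rhoi e1 e2].
have e1' := e1 (mem_blocks hx) (mem_blocks hy).
rewrite [x]surjective_pairing [y]surjective_pairing e1'; congr (_, _).
have [pi _] := hpsi (mem_blocks hx); apply: pi; first exact: mem_slice_snd.
  by rewrite e1'; exact: mem_slice_snd.
by rewrite e2 e1'.
Qed.

Lemma block_map_lt x y : x \in U -> y \in U -> (I r1 lt [:: x; y] <-> I r2 lt [:: F x; F y]).
Proof.
move=> hx hy; rewrite !Iomega_lt /=.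
have bx := mem_blocks hx; have by' := mem_blocks hy.
rewrite -(rhoo bx by'); case: (eqVneq x.1 y.1) => [e|ne].
  have [_ [_ pR]] := hpsi bx.
  have hs2 : size [:: x.2; y.2] = ar lt by rewrite arlt.
  have := pR lt _ hs2 ltac:(by rewrite /= mem_slice_snd //= e mem_slice_snd).
  by rewrite /= -e; tauto.
have ne' : rho x.1 <> rho y.1 by move/rhoi => /(_ bx by') /eqP; rewrite (negbTE ne).
by split => [[h|[/eqP]]|[h|[]]] //; [left | rewrite (negbTE ne) | left].
Qed.

Lemma block_map_nlt R xs : R != lt -> size xs = ar R -> all (mem U) xs ->
  (I r1 R xs <-> I r2 R (map F xs)).
Proof.
move=> hR hs; rewrite !Iomega_nlt //; case: xs hs => [|x0 xs] hs hxs; first by [].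
have inU a : a \in x0 :: xs -> a \in U := allP hxs a.
have sbF : single_block (x0 :: xs) <-> single_block (map F (x0 :: xs)).
  split => [h a b /mapP[a' ha' ->] /mapP[b' hb' ->] /=|h a b ha hb].
    by rewrite (h a' b').
  apply: rhoi; try exact/mem_blocks/inU.
  exact: h _ _ (map_f F ha) (map_f F hb).
have sndF : single_block (x0 :: xs) ->
    map snd (map F (x0 :: xs)) = map (psi x0.1) (map snd (x0 :: xs)).
  move=> h; rewrite -!map_comp; apply/eq_in_map => a ha /=.
  by rewrite (h a x0) ?mem_head.
have in_slice : single_block (x0 :: xs) ->
    all (mem (slice U x0.1)) (map snd (x0 :: xs)).
  move=> h; rewrite all_map; apply/allP => a ha /=.
  by rewrite -(h a x0) ?mem_head //; exact/mem_slice_snd/inU.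
have [_ [_ pR]] := hpsi (mem_blocks (inU _ (mem_head _ _))).
have sz : size (map snd (x0 :: xs)) = ar R by rewrite size_map.
split => [[h1 h2]|[/sbF h1 h2]].
  by split; [apply/sbF | rewrite sndF //; apply/(pR _ _ sz (in_slice h1))].
by split => //; apply/(pR _ _ sz (in_slice h1)); rewrite -sndF.
Qed.

Lemma block_iso : local_iso ar (I r1) (I r2) U (F @` U) F.
Proof.
split; first exact: block_map_inj.
split => // R xs hs hxs; case: (eqVneq R lt) => [eR|hR]; last exact: block_map_nlt.
move: hs hxs; rewrite eR arlt; case: xs => [|x [|y [|]]] //= _ /and3P[hx hy _].
exact: block_map_lt.
Qed.
End BlockMap.

Lemma local_iso_blocks U V f : local_iso ar (I ltn) (I ltn) U V f ->
  exists g : nat -> nat, [/\ {in U, forall x, (f x).1 = g x.1},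
    {in blocks U &, forall p q, p < q -> g p < g q} & g @` blocks U = blocks V].
Proof.
move=> hf.
have hg p : exists q, forall x, x \in U -> x.1 = p -> (f x).1 = q.
  case: (boolP (p \in blocks U)) => [/blocksP [y hy]|hp].
    by exists (f (p, y)).1 => x hx ex; apply/(local_iso_same_block hf hx hy); rewrite ex.
  by exists 0 => x hx ex; case/negP: hp; rewrite -ex; exact: mem_blocks.
have [g hgA] := ClassicalEpsilon.choice _ hg.
have gA : {in U, forall x, (f x).1 = g x.1} by move=> x hx; exact: hgA.
exists g; split => //.
  move=> p q /blocksP[y hy] /blocksP[z hz] pq.
  have := local_iso_block_order hf hy hz; rewrite !gA //=.
  by move=> /(_ (elimF eqP (ltn_eqF pq))) [+ _]; apply.
case: hf => _ [fU _]; apply/fsetP => q; apply/imfsetP/idP => [[p /blocksP[y hy] ->]|].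
  by rewrite -[p]/((p, y).1) -gA //; apply/mem_blocks; rewrite -fU in_imfset.
rewrite -fU => /imfsetP[_ /imfsetP[x hx ->] ->].
by exists x.1; [exact: mem_blocks | exact: gA].
Qed.

Lemma local_iso_slice U V f g p : local_iso ar (I ltn) (I ltn) U V f ->
  {in U, forall x, (f x).1 = g x.1} -> {in blocks U &, injective g} ->
  p \in blocks U -> local_iso ar Ts Ts (slice U p) (slice V (g p)) (fun y => (f (p, y)).2).
Proof.
move=> hf gA gi hp.
have fp y : (p, y) \in U -> f (p, y) = (g p, (f (p, y)).2).
  by move=> hy; rewrite [LHS]surjective_pairing (gA _ hy).
case: (hf) => fi [fU fR]; split.
  move=> y1 y2; rewrite !mem_slice => h1 h2 e.
  have : f (p, y1) = f (p, y2) by rewrite fp // e -fp.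
  by move/fi => /(_ h1 h2) [].
split.
  apply/fsetP => z; apply/imfsetP/idP => [[y hy ->]|].
    have hy' : (p, y) \in U by rewrite -mem_slice.
    by rewrite mem_slice -fp // -fU in_imfset.
  rewrite mem_slice -fU => /imfsetP[x hx e].
  have ex : x.1 = p by apply: gi; [exact: mem_blocks | | rewrite -gA // -e].
  exists x.2; first by rewrite mem_slice -ex -surjective_pairing.
  by rewrite -ex -surjective_pairing -e.
move=> R ys hs hys.
have hU : all (mem U) [seq (p, y) | y <- ys].
  by rewrite all_map; apply/allP => y /(allP hys) /=; rewrite mem_slice.
rewrite -(@Iomega_block ltn R p ys) //; last by rewrite /= ltnn.
rewrite (fR R _ _ hU); last by rewrite size_map.
have -> : map f [seq (p, y) | y <- ys] =
          [seq (g p, y) | y <- [seq (f (p, y)).2 | y <- ys]].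
  by rewrite -!map_comp; apply/eq_in_map => y hy /=; apply/fp/(allP hU)/map_f.
by apply: (@Iomega_block ltn R (g p)); rewrite /= ?ltnn ?size_map.
Qed.

Lemma local_iso_decompose U V f : local_iso ar (I ltn) (I ltn) U V f ->
  size (block_list V) = size (block_list U) /\ forall t, t < size (block_list U) ->
  local_iso ar Ts Ts (slice U (nth 0 (block_list U) t)) (slice V (nth 0 (block_list V) t))
    (fun y => (f (nth 0 (block_list U) t, y)).2).
Proof.
move=> hf; have [g [gA gB gC]] := local_iso_blocks hf.
have gi : {in blocks U &, injective g}.
  move=> p q hp hq e; case: (ltngtP p q) => // pq.
    by have := gB _ _ hp hq pq; rewrite e ltnn.
  by have := gB _ _ hq hp pq; rewrite e ltnn.
have blV : block_list V = map g (block_list U).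
  by rewrite /block_list -gC sort_map_increasing.
split => [|t ht]; first by rewrite blV size_map.
rewrite blV (nth_map 0) //; apply: local_iso_slice => //.
by rewrite -mem_block_list mem_nth.
Qed.
End Omega.

Definition assemble (T : choiceType) (S : {fset nat * T}) (J : seq nat) (Us : seq {fset T}) :=
  [fset x in S | (x.1 \in J) && (x.2 \in nth fset0 Us (index x.1 J))].

Lemma assemble_slices (T : choiceType) (S U : {fset nat * T}) : U `<=` S ->
  assemble S (block_list U) [seq slice U p | p <- block_list U] = U.
Proof.
move=> /fsubsetP US; apply/fsetP => x; rewrite inE.
apply/andP/idP => [[hx /andP[h1 h2]]|hx].
  by move: h2; rewrite (nth_map 0) ?index_mem // nth_index // mem_slice -surjective_pairing.
split; first exact: US.
have hb : x.1 \in block_list U by rewrite mem_block_list mem_blocks.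
by rewrite hb (nth_map 0) ?index_mem // nth_index // mem_slice_snd.
Qed.

Section RamseyIomega.
Variables (L : countType) (ar : L -> nat) (E lt : L) (T : countType) (Ts : interp L T) (t0 : T).
Hypotheses (hE : E != lt) (arE : ar E = 2) (arlt : ar lt = 2)
  (htour : tournament (brel Ts E)) (ramseyT : ramsey ar (age ar Ts)).

Local Notation I := (Iomega lt ltn Ts).
Local Notation isoT := (isomorphic ar Ts Ts).

Lemma copy_on_blocks (SB : {fset nat * T}) (H : {fset nat}) (Ws : nat -> {fset T}) :
  #|` H| = size (block_list SB) -> (forall j, isoT [fset x.2 | x in SB] (Ws j)) ->
  exists2 W, isomorphic ar I I SB W & forall x, x \in W -> x.1 \in H /\ x.2 \in Ws x.1.
Proof.
move=> cH hWs; have [psi hpsi] := ClassicalEpsilon.choice _ hWs.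
set hs := sort leq (enum_fset H); set pb := block_list SB.
have shs : sorted ltn hs.
  by rewrite ltn_sorted_uniq_leq sort_uniq fset_uniq sort_sorted //; exact: leq_total.
have szhs : size hs = size pb by rewrite size_sort.
(* the [i]-th block of [SB] goes to the [i]-th element of [H] *)
pose rho p := nth 0 hs (index p pb).
have hib p : p \in blocks SB -> index p pb < size hs by rewrite szhs index_mem mem_block_list.
have rhoi : {in blocks SB &, injective rho}.
  move=> p q hp hq /eqP; rewrite nth_uniq ?hib ?sort_uniq ?fset_uniq // => /eqP e.
  by rewrite -(nth_index 0 (_ : p \in pb)) ?e ?nth_index // mem_block_list.
have rhoo : {in blocks SB &, forall p q, ltn p q = ltn (rho p) (rho q)}.
  move=> p q hp hq /=; rewrite /rho nth_ltn_mono ?hib //.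
  rewrite -{1}(nth_index 0 (_ : p \in pb)) ?mem_block_list //.
  rewrite -{1}(nth_index 0 (_ : q \in pb)) ?mem_block_list //.
  by rewrite nth_ltn_mono ?block_list_sorted // -szhs hib.
have hsl p : p \in blocks SB ->
    local_iso ar Ts Ts (slice SB p) (psi (rho p) @` slice SB p) (psi (rho p)).
  move=> hp; apply: local_iso_restr (hpsi (rho p)) _.
  by apply/fsubsetP => y; rewrite mem_slice => hy; apply/imfsetP; exists (p, y).
exists (block_map rho (fun p => psi (rho p)) @` SB).
  by eexists; exact: (block_iso (psi := fun p => psi (rho p)) arlt rhoi rhoo hsl).
move=> _ /imfsetP[y hy ->] /=; split.
  by rewrite -(mem_sort leq) -/hs mem_nth ?hib ?mem_blocks.
have [_ [<- _]] := hpsi (rho y.1).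
by apply/imfsetP; exists y.2 => //; apply/imfsetP; exists y.
Qed.

Lemma slices_are_copies (SA U : {fset nat * T}) (Ws : nat -> {fset T}) :
  isomorphic ar I I SA U -> (forall x, x \in U -> x.2 \in Ws x.1) ->
  copies ar Ts [seq slice SA p | p <- block_list SA] (map Ws (block_list U))
    [seq slice U p | p <- block_list U].
Proof.
case=> f hf hU; have [szU hsl] := local_iso_decompose hE arE arlt htour hf.
split => [|t]; first by rewrite !size_map szU.
rewrite size_map => ht; rewrite !(nth_map 0) ?szU //; split.
  by apply/fsubsetP => y; rewrite mem_slice => /hU.
by exists (fun y => (f (nth 0 (block_list SA) t, y)).2); apply: hsl.
Qed.

(* With [a]
   and [b] the numbers of blocks of [SA] and [SB], take [c] blocks as given by
   the finite Ramsey theorem for [a]-subsets and [b]-subsets, and a set [Z]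
   as given by [ramsey_tuples] for all increasing [a]-tuples of these blocks.
   A colouring of the subsets of [Cc `*` Z] first becomes a colouring of the
   [a]-subsets of the blocks, and then is constant on a copy of [SB]. *)
Lemma ramsey_fset_Iomega (SA SB : {fset nat * T}) k : 0 < k ->
  exists SC : {fset nat * T}, forall kap : {fset nat * T} -> 'I_k,
  exists W, [/\ W `<=` SC, isomorphic ar I I SB W &
    forall U1 U2, U1 `<=` W -> U2 `<=` W ->
      isomorphic ar I I SA U1 -> isomorphic ar I I SA U2 -> kap U1 = kap U2].
Proof.
move=> k1; set a := size (block_list SA).
have [c hc] := finite_ramsey k1 a (size (block_list SB)).
set Cc := [fset j in iota 0 c].
have cCc : #|` Cc| = c by rewrite card_fseq undup_id ?iota_uniq // size_iota.
set Js := [seq sort leq (enum_fset J) | J <- enum_fset (fpowerset Cc) & #|` J| == a].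
have hJs J : J \in Js -> size J = size [seq slice SA p | p <- block_list SA] /\ uniq J.
  case/(@mapP {fset nat} (seq nat)) => J0; rewrite mem_filter => /andP[/eqP cJ0 _] ->.
  by rewrite size_map size_sort sort_uniq fset_uniq.
have [Z hZ] := ramsey_tuples t0 ramseyT k1 hJs [fset x.2 | x in SB].
exists (Cc `*` Z) => kap.
have [Ws [hWs [col hcol]]] := hZ (fun J Us => kap (assemble (Cc `*` Z) J Us)).
have [H [sH cH [c0 hc0]]] :=
  hc Cc (fun J => col (sort leq (enum_fset J))) (eq_leq (esym cCc)).
have [W isoW hW] := copy_on_blocks cH (fun j => proj2 (hWs j)).
have WSC : W `<=` Cc `*` Z.
  apply/fsubsetP => x /hW [h1 h2]; rewrite in_fsetM (fsubsetP sH) //=.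
  by have [/fsubsetP + _] := hWs x.1; apply.
suff colU U : U `<=` W -> isomorphic ar I I SA U -> kap U = c0.
  by exists W; split => // U1 U2 h1 h2 i1 i2; rewrite !colU.
move=> UW isoU.
have hU x : x \in U -> x.2 \in Ws x.1 by move=> hx; exact: (hW x (fsubsetP UW x hx)).2.
have cU := slices_are_copies isoU hU.
have cbU : #|` blocks U| = a by case: cU; rewrite !size_map size_sort.
have bUH : blocks U `<=` H.
  by apply/fsubsetP => _ /imfsetP[x hx ->]; exact: (hW x (fsubsetP UW x hx)).1.
rewrite -(assemble_slices (fsubset_trans UW WSC)) hcol //; first exact: hc0.
apply/(@mapP {fset nat} (seq nat)); exists (blocks U) => //.
rewrite mem_filter cbU eqxx /=; suff : blocks U \in fpowerset Cc by [].
by rewrite fpowersetE (fsubset_trans bUH sH).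
Qed.

Theorem ramsey_Iomega_ltn : ramsey ar (age ar I).
Proof. exact: ramsey_of_fset (0, t0) ramsey_fset_Iomega. Qed.
End RamseyIomega.

(* Renaming the blocks by a map preserving the block order on finite sets
   transports finite substructures of [Iomega]; hence two block orders
   realising the same finite configurations give the same age. *)
Lemma age_transfer (L : countType) (ar : L -> nat) (lt : L) (T : countType)
  (Ts : interp L T) (r1 r2 : rel nat) (A : finstr L) :
  ar lt = 2 ->
  (forall P : {fset nat}, exists rho : nat -> nat,
      {in P &, injective rho} /\ {in P &, forall p q, r1 p q = r2 (rho p) (rho q)}) ->
  age ar (Iomega lt r1 Ts) A -> age ar (Iomega lt r2 Ts) A.
Proof.
move=> arlt hr [e he]; set U := [fset e x | x : fcar A].
have [rho [ri ro]] := hr (blocks U).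
have hid p : p \in blocks U -> local_iso ar Ts Ts (slice U p) (id @` slice U p) id.
  by move=> _; split; [move=> x y | rewrite imfset_id; split => // R xs _ _; rewrite map_id].
have := block_iso (psi := fun _ => id) arlt ri ro hid.
by move/(emb_local_iso he) => h; exists (fun x => (rho (e x).1, (e x).2)).
Qed.

(* A strict order on [nat] realised inside [rat] is, on every finite set,
   isomorphic to the usual order: rank each element among the set. *)
Lemma rank_embedding (prec : rel nat) (h : nat -> rat) :
  injective h -> (forall i j, prec i j = (h i < h j)%R) ->
  forall P : {fset nat}, exists rho : nat -> nat,
    {in P &, injective rho} /\ {in P &, forall p q, prec p q = ltn (rho p) (rho q)}.
Proof.
move=> hi hp P; exists (fun n => #|` [fset q in P | prec q n]|).
have rank_mono : {in P &, forall p q, prec p q ->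
    #|` [fset s in P | prec s p]| < #|` [fset s in P | prec s q]|}.
  move=> p q hP hQ pq; apply: fproper_ltn_card; rewrite fproperE; apply/andP; split.
    apply/fsubsetP => s; rewrite !inE => /andP[-> sp] /=.
    by move: sp pq; rewrite !hp; apply: lt_trans.
  by apply/fsubsetP => /(_ p); rewrite !inE hP pq hp ltxx /= => /(_ isT).
have tot p q : p != q -> prec p q || prec q p.
  by rewrite !hp; case: (ltgtP (h p) (h q)) => // /hi ->; rewrite eqxx.
split.
  move=> p q hP hQ e; apply/eqP; apply: contraT => /tot /orP[] /rank_mono.
    by rewrite e ltnn => /(_ hP hQ).
  by rewrite e ltnn => /(_ hQ hP).
move=> p q hP hQ /=; case: (eqVneq p q) => [->|npq]; first by rewrite ltnn hp ltxx.
case/orP: (tot p q npq) => pq; first by rewrite pq (rank_mono p q hP hQ pq).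
rewrite ltnNge (ltnW (rank_mono q p hQ hP pq)) /= hp; apply/negbTE.
by rewrite -leNgt le_eqVlt -hp pq orbT.
Qed.

Theorem theorem7p3 (L : countType) (ar : L -> nat) (E lt : L)
  (T : countType) (Ts : interp L T) (prec : rel nat) :
  E != lt -> ar E = 2 -> ar lt = 2 ->
  countably_infinite T ->
  tournament (brel Ts E) ->
  homogeneous_digraph (brel Ts E) ->
  strict_linear_order (brel Ts lt) ->
  iso_to_Q prec ->
  ramsey ar (age ar Ts) ->
  ramsey ar (age ar (Iomega lt prec Ts)).
Proof.
move=> hE arE arlt hinf htour _ _ [h [[g hK gK] hp]] ramseyT.
have [t0 _] : exists t : T, True.
  by apply: NNPP => nt; apply: hinf; exists [::] => x; case: nt; exists x.
have to_ltn A : age ar (Iomega lt prec Ts) A -> age ar (Iomega lt ltn Ts) A.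
  exact/age_transfer/(rank_embedding (can_inj hK) hp).
(* (nat, <) embeds into (nat, prec) through (Q, <) *)
have of_ltn A : age ar (Iomega lt ltn Ts) A -> age ar (Iomega lt prec Ts) A.
  apply: age_transfer arlt _ => P; exists (fun n => g (n%:R)%R); split.
    by move=> p q _ _ /(congr1 h); rewrite !gK => /eqP; rewrite eqr_nat => /eqP.
  by move=> p q _ _ /=; rewrite hp !gK ltr_nat.
move=> k k1 A B /to_ltn hA /to_ltn hB.
have [C [hC hCA]] := ramsey_Iomega_ltn t0 hE arE arlt htour ramseyT k1 hA hB.
by exists C; split => //; exact: of_ltn.
Qed.
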